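(* Let $G=(g_{ij})$ be a Hermitian $4\times4$ matrix with $g_{ii}=0$, $g_{12}=g_{23}=g_{34}=1$, $|g_{13}|=1$, $g_{14}\ne0$, $g_{24}\ne0$. Then $G$ is the normalized Gram matrix of some ordered quadruple of distinct points of $\partial\mathbf H^2_{\mathbb C}$ if and only if $\mathrm{Re}(g_{13})\le0$, $\mathrm{Re}(g_{24}\overline{g}_{14})\le0$ and $\det G=0$.
   Context: $\mathbb C^{2,1}$ is $\mathbb C^3$ with the Hermitian form $\langle Z,W\rangle=z_1\overline{w}_3+z_2\overline{w}_2+z_3\overline{w}_1$; $\partial\mathbf H^2_{\mathbb C}$ is the set of null lines in $\mathbb P\mathbb C^2$. For a quadruple of boundary points with null lifts $P_i$, a Gram matrix is $(\langle P_i,P_j\rangle)$; the normalized Gram matrix is the unique Gram matrix (for suitable lifts) with $g_{ii}=0$, $g_{12}=g_{23}=g_{34}=1$, $|g_{13}|=1$. *)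

From HB Require Import structures.
From mathcomp Require Import all_boot all_order all_algebra.
From mathcomp Require Import reals complex.
Set Implicit Arguments. Unset Strict Implicit. Unset Printing Implicit Defensive.
Import Order.TTheory GRing.Theory Num.Theory.
Local Open Scope ring_scope.

Section Defs.
Variable C : numClosedFieldType.

(* Hermitian form on C^{2,1}: <Z,W> = z1 conj(w3) + z2 conj(w2) + z3 conj(w1). *)
Definition i3_0 : 'I_3 := @Ordinal 3 0 isT.
Definition i3_1 : 'I_3 := @Ordinal 3 1 isT.
Definition i3_2 : 'I_3 := @Ordinal 3 2 isT.

Definition hform (Z W : 'cV[C]_3) : C :=
  Z i3_0 0 * (W i3_2 0)^* + Z i3_1 0 * (W i3_1 0)^* + Z i3_2 0 * (W i3_0 0)^*.

(* A null vector: a nonzero lift of a point of the boundary of H^2_C. *)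
Definition null_vec (Z : 'cV[C]_3) : Prop := Z != 0 /\ hform Z Z = 0.

Definition same_point (Z W : 'cV[C]_3) : Prop := exists c : C, W = c *: Z.

Definition gram_of_distinct_boundary_quadruple (G : 'M[C]_4) : Prop :=
  exists P : 'I_4 -> 'cV[C]_3,
    (forall i, null_vec (P i)) /\
    (forall i j, i != j -> ~ same_point (P i) (P j)) /\
    (forall i j, G i j = hform (P i) (P j)).

Definition hermitian_mx (G : 'M[C]_4) : Prop := forall i j, G j i = (G i j)^*.
End Defs.

(* 1-based paper indices 1..4 correspond to ordinals 0..3 *)
Definition g1 : 'I_4 := @Ordinal 4 0 isT.
Definition g2 : 'I_4 := @Ordinal 4 1 isT.
Definition g3 : 'I_4 := @Ordinal 4 2 isT.
Definition g4 : 'I_4 := @Ordinal 4 3 isT.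

From HB Require Import structures.
From mathcomp Require Import all_boot all_order all_algebra.
From mathcomp Require Import reals complex.
From mathcomp Require Import ring.
Import Order.TTheory GRing.Theory Num.Theory.
Local Open Scope ring_scope.
Set Implicit Arguments. Unset Strict Implicit.

(** Necessity: for three null vectors the Gram determinant reduces to
[g12 g23 g31 + g13 g21 g32], and it is minus the squared modulus of their
determinant since the form has signature (2,1); moreover a Gram matrix of four
vectors of [C^3] has rank at most 3.  Sufficiency: in normalized form, with
[w = 1 - g14 - conj g13 g24], the conditions say that the Hermitian matrix
[[2 Re g13, w]; [conj w, 2 Re (g24 conj g14)]] is negative semidefinite and
has determinant [det G = 0], hence equals [-v v^*] for some [v = (y, b)]; then
[y] and [b] are the middle coordinates of explicit lifts of the third and
fourth points. *)

Section HermitianForm.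
Variable C : numClosedFieldType.
Implicit Types (X Y Z W : 'cV[C]_3) (a p q s t w : C).

Lemma Re_le0E (x : C) : ('Re x <= 0) = (x + x^* <= 0).
Proof. by rewrite ReE pmulr_lle0 // invr_gt0 ltr0n. Qed.

Lemma hform0l W : hform 0 W = 0.
Proof. by rewrite /hform !mxE !mul0r !addr0. Qed.

Lemma hformZr Z c : hform Z (c *: Z) = c^* * hform Z Z.
Proof. by rewrite /hform !mxE !rmorphM /=; ring. Qed.

Lemma hform_neq0_vecl Z W : hform Z W != 0 -> Z != 0.
Proof. by apply: contra_neq => ->; rewrite hform0l. Qed.

Lemma hform_neq0_not_same_point Z W :
  hform Z Z = 0 -> hform Z W != 0 -> ~ same_point Z W.
Proof. by move=> hZ hZW [c eW]; move: hZW; rewrite eW hformZr hZ mulr0 eqxx. Qed.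

Lemma hform_null_triple_le0 X Y Z :
  hform X X = 0 -> hform Y Y = 0 -> hform Z Z = 0 ->
  hform X Y * hform Y Z * hform Z X + hform X Z * hform Y X * hform Z Y <= 0.
Proof.
move=> hX hY hZ.
pose d := X i3_0 0 * (Y i3_1 0 * Z i3_2 0 - Y i3_2 0 * Z i3_1 0)
  - X i3_1 0 * (Y i3_0 0 * Z i3_2 0 - Y i3_2 0 * Z i3_0 0)
  + X i3_2 0 * (Y i3_0 0 * Z i3_1 0 - Y i3_1 0 * Z i3_0 0).
have gram_det : hform X X * (hform Y Y * hform Z Z - hform Y Z * hform Z Y)
  - hform X Y * (hform Y X * hform Z Z - hform Y Z * hform Z X)
  + hform X Z * (hform Y X * hform Z Y - hform Y Y * hform Z X) = - (d * d^*).
  by rewrite /d /hform !(rmorphD, rmorphB, rmorphM) /=; ring.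
move: gram_det; rewrite hX hY hZ => gram_det.
have -> : hform X Y * hform Y Z * hform Z X + hform X Z * hform Y X * hform Z Y
  = - (d * d^*) by rewrite -gram_det; ring.
by rewrite oppr_le0 mul_conjC_ge0.
Qed.

Lemma det_hform_gram n (P : 'I_n -> 'cV[C]_3) :
  (3 < n)%N -> \det (\matrix_(i, j) hform (P i) (P j)) = 0.
Proof.
move=> n_gt3.
pose A : 'M[C]_(n, 3) := \matrix_(i, k) P i k 0.
pose B : 'M[C]_(3, n) := \matrix_(k, j) (P j (rev_ord k) 0)^*.
have -> : \matrix_(i, j) hform (P i) (P j) = A *m B.
  apply/matrixP => i j; rewrite !mxE !big_ord_recl big_ord0 addr0 addrA !mxE /hform.
  by congr (P i _ 0 * (P j _ 0)^* + P i _ 0 * (P j _ 0)^* + P i _ 0 * (P j _ 0)^*);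
    apply: val_inj.
apply/eqP; apply: contraTT n_gt3; rewrite -unitfE -unitmxE -row_free_unit.
move/eqP => rkAB; rewrite -leqNgt -rkAB.
exact: leq_trans (mxrankM_maxl A B) (rank_leq_col A).
Qed.

Lemma exists_rank_one_factor s t w :
  s <= 0 -> t <= 0 -> w * w^* = s * t ->
  exists y b, [/\ y * y^* = - s, y * b^* = w & b * b^* = - t].
Proof.
move=> s_le0 t_le0 wwst.
have sqrtCN_conj r : r <= 0 -> sqrtC (- r) * (sqrtC (- r))^* = - r.
  by move=> r_le0; rewrite geC0_conj ?sqrtC_ge0 ?oppr_ge0 // -expr2 sqrtCK.
have [s0|s_neq0] := eqVneq s 0.
  have w0 : w = 0.
    have : w * w^* == 0 by rewrite wwst s0 mul0r.
    by rewrite mulf_eq0 conjC_eq0 orbb => /eqP.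
  by exists 0, (sqrtC (- t)); rewrite s0 w0 oppr0 !mul0r sqrtCN_conj.
have y_neq0 : sqrtC (- s) != 0 by rewrite sqrtC_eq0 oppr_eq0.
have y_conj : (sqrtC (- s))^* = sqrtC (- s) by rewrite geC0_conj ?sqrtC_ge0 ?oppr_ge0.
exists (sqrtC (- s)), (w^* / sqrtC (- s)); split; first exact: sqrtCN_conj.
  by rewrite rmorphM rmorphV ?unitfE //= conjCK y_conj mulrC divfK.
rewrite rmorphM rmorphV ?unitfE //= conjCK y_conj.
rewrite -[w^* / _ * _]mulrA [_^-1 * _]mulrC !mulrA -[w^* * w]mulrC wwst.
by rewrite -mulrA -invfM -expr2 sqrtCK; field.
Qed.

Lemma ord4_cases (i : 'I_4) : [\/ i = g1, i = g2, i = g3 | i = g4].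
Proof.
by case: i => [[|[|[|[|//]]]] ?]; [apply: Or41|apply: Or42|apply: Or43|apply: Or44];
  apply: val_inj.
Qed.

Definition normalized_gram a p q : 'M[C]_4 :=
  \matrix_(i, j) nth 0 (nth [::] [:: [:: 0; 1; a; p]; [:: 1; 0; 1; q];
       [:: a^*; 1; 0; 1]; [:: p^*; q^*; 1; 0]] i) j.

Lemma normalized_gramE (G : 'M[C]_4) :
  hermitian_mx G -> (forall k, G k k = 0) ->
  G g1 g2 = 1 -> G g2 g3 = 1 -> G g3 g4 = 1 ->
  G = normalized_gram (G g1 g3) (G g1 g4) (G g2 g4).
Proof.
move=> hermG G_diag G12 G23 G34; apply/matrixP => i j; rewrite mxE.
have [->|->|->|->] := ord4_cases i; have [->|->|->|->] := ord4_cases j => /=;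
  rewrite ?G_diag ?G12 ?G23 ?G34 // ?(hermG g1 g2) ?(hermG g1 g3) ?(hermG g1 g4)
    ?(hermG g2 g3) ?(hermG g2 g4) ?(hermG g3 g4) ?G12 ?G23 ?G34 ?rmorph1 //.
Qed.

Lemma det_normalized_gram a p q :
  \det (normalized_gram a p q) =
  (1 - p - a^* * q) * (1 - p - a^* * q)^* - (a + a^*) * (q * p^* + q^* * p).
Proof.
rewrite (expand_det_row _ ord0) !big_ord_recl big_ord0 /cofactor.
rewrite !(expand_det_row _ ord0) !big_ord_recl !big_ord0 /cofactor.
rewrite !(expand_det_row _ ord0) !big_ord_recl !big_ord0 /cofactor.
rewrite !det_mx11 !mxE /= !rmorphB !rmorphM /= !rmorph1 conjCK.
ring.
Qed.

Lemma normalized_gram_neq0 a p q i j :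
  a != 0 -> p != 0 -> q != 0 -> i != j -> normalized_gram a p q i j != 0.
Proof.
move=> a_neq0 p_neq0 q_neq0; rewrite mxE.
by have [->|->|->|->] := ord4_cases i; have [->|->|->|->] := ord4_cases j;
  rewrite //= ?oner_eq0 ?conjC_eq0.
Qed.

Definition cv3 x y z : 'cV[C]_3 := \col_(k < 3) nth 0 [:: x; y; z] k.

Definition normalized_lifts a p q y b (i : 'I_4) : 'cV[C]_3 :=
  nth 0 [:: cv3 1 0 0; cv3 0 0 1; cv3 1 y a^*; cv3 q^* b p^*] i.

Lemma normalized_gram_lifts a p q y b :
  y * y^* = - (a + a^*) -> y * b^* = 1 - p - a^* * q ->
  b * b^* = - (q * p^* + q^* * p) ->
  forall i j, normalized_gram a p q i j =
    hform (normalized_lifts a p q y b i) (normalized_lifts a p q y b j).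
Proof.
move=> yy yb bb.
have by' : b * y^* = 1 - p^* - a * q^*.
  by rewrite -[b]conjCK -rmorphM mulrC yb !(rmorphB, rmorphM) /= conjCK rmorph1.
move=> i j; rewrite mxE.
by have [->|->|->|->] := ord4_cases i; have [->|->|->|->] := ord4_cases j;
  rewrite /= /hform !mxE /= ?conjCK ?rmorph0 ?rmorph1 ?yy ?yb ?by' ?bb; ring.
Qed.

Lemma gram_of_lifts_distinct (G : 'M[C]_4) (P : 'I_4 -> 'cV[C]_3) :
  (forall i j, G i j = hform (P i) (P j)) -> (forall i, G i i = 0) ->
  (forall i j, i != j -> G i j != 0) -> gram_of_distinct_boundary_quadruple G.
Proof.
move=> GP G_diag G_off; exists P; split; [|split] => // [i | i j ij].
  have [j ij] : exists j, i != j.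
    by case: (eqVneq i g1) => [->|i_neq]; [exists g2 | exists g1].
  by split; [apply: (@hform_neq0_vecl _ (P j)) | ]; rewrite -GP ?G_diag ?G_off.
by apply: hform_neq0_not_same_point; rewrite -GP ?G_diag ?G_off.
Qed.

End HermitianForm.

Theorem proposition3p1 (R : realType) (G : 'M[R[i]]_4) :
  hermitian_mx G ->
  (forall k, G k k = 0) ->
  G g1 g2 = 1 -> G g2 g3 = 1 -> G g3 g4 = 1 ->
  `|G g1 g3| = 1 ->
  G g1 g4 != 0 -> G g2 g4 != 0 ->
  (gram_of_distinct_boundary_quadruple G <->
   ('Re (G g1 g3) <= 0 /\ 'Re (G g2 g4 * (G g1 g4)^*) <= 0 /\ \det G = 0)).
Proof.
move=> hermG G_diag G12 G23 G34 G13 G14 G24.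
have GE := normalized_gramE hermG G_diag G12 G23 G34.
set a := G g1 g3 in G13 GE *; set p := G g1 g4 in G14 GE *.
set q := G g2 g4 in G24 GE *.
split.
- case=> P [P_null [_ GP]].
  have triple i j k : G i j * G j k * G k i + G i k * G j i * G k j <= 0.
    rewrite !GP; apply: hform_null_triple_le0;
      [case: (P_null i) | case: (P_null j) | case: (P_null k)] => //.
  split; [|split].
  + by move: (triple g1 g2 g3); rewrite GE !mxE /= !mul1r !mulr1 Re_le0E addrC.
  + move: (triple g1 g2 g4); rewrite GE !mxE /= !mul1r !mulr1 Re_le0E.
    by rewrite rmorphM /= conjCK [q^* * p]mulrC.
  + have -> : G = \matrix_(i, j) hform (P i) (P j) by apply/matrixP => i j; rewrite mxE.
    exact: det_hform_gram.
- case; rewrite !Re_le0E rmorphM /= conjCK => Re_a [Re_qp].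
  rewrite {1}GE det_normalized_gram => /eqP; rewrite subr_eq0 => /eqP w_st.
  have [y [b [yy yb bb]]] := exists_rank_one_factor Re_a Re_qp w_st.
  apply: (@gram_of_lifts_distinct _ _ (normalized_lifts a p q y b)).
  + by rewrite GE; apply: normalized_gram_lifts.
  + exact: G_diag.
  + move=> i j ij; rewrite GE normalized_gram_neq0 //.
    by rewrite -normr_eq0 G13 oner_eq0.
Qed.
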